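(* Let $(G,\ell)$ be an instance of \textsc{Geometric Thickness} with $\ell\ge 2$, let $F$ be a minimum feedback edge set of $G$ of size $k$, and let $G_j$ be the graph constructed as follows. Let $G'$ be obtained from $G$ by exhaustively deleting vertices of degree $0$ or $1$; let $T$ be the forest with $V(T)=V(G')$ and $E(T)=E(G')\setminus F$; let $C$ be the union of $\{v\in V(T):\deg_T(v)\ge 3\}$ and the set of endpoints of edges of $F$; decompose $T$ into the $x$ edge-disjoint paths whose endpoints lie in $C$ and whose internal vertices lie outside $C$, and order them by length as $P_1,\dots,P_x$ with $|E(P_1)|\le\dots\le|E(P_x)|$; let $G_0=(C,F)$ and $G_i=G_0\cup P_1\cup\dots\cup P_i$ for $i\in[x]$; finally let $j$ be the smallest element of $\{0,\dots,x-1\}$ with $|E(P_{j+1})|>2(|E(G_j)|+x)$ if such an element exists, and $j=x$ otherwise. Then $G_j$ has at most $10k\cdot 81^k$ vertices.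
   Context: A feedback edge set of $G$ is a set of edges whose removal makes $G$ acyclic. \textsc{Geometric Thickness}: given a graph $G$ and integer $\ell$, decide whether there is a straight-line drawing of $G$ with an edge coloring in $[\ell]$ such that no two same-colored edges cross. *)

From mathcomp Require Import all_boot.
Set Implicit Arguments. Unset Strict Implicit. Unset Printing Implicit Defensive.

Section Defs.
Variable V : finType.
Implicit Types (E F : {set {set V}}) (S C : {set V}) (p : seq V) (P : seq (seq V)).

Definition simple_graph E : Prop := forall e, e \in E -> #|e| = 2.

Definition is_cycle E (c : seq V) : bool :=
  [&& uniq c, 2 < size c & cycle (fun a b => [set a; b] \in E) c].

Definition acyclic E : Prop := forall c : seq V, ~~ is_cycle E c.

Definition feedback_edge_set E F : Prop := F \subset E /\ acyclic (E :\: F).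

Definition min_feedback_edge_set E F : Prop :=
  feedback_edge_set E F /\ forall F', feedback_edge_set E F' -> #|F| <= #|F'|.

Definition deg_in E S (v : V) : nat := #|[set e in E | (v \in e) && (e \subset S)]|.

Definition prune_step E S : {set V} := [set v in S | 2 <= deg_in E S v].

(* G' : exhaustive deletion of vertices of degree 0 or 1 (#|V| rounds suffice) *)
Definition VG' E : {set V} := iter #|V| (prune_step E) setT.
Definition EG' E : {set {set V}} := [set e in E | e \subset VG' E].

Definition ET E F : {set {set V}} := EG' E :\: F.
Definition degT E F (v : V) : nat := #|[set e in ET E F | v \in e]|.

Definition Cset E F : {set V} :=
  [set v in VG' E | 3 <= degT E F v] :|: \bigcup_(e in F) e.

Definition pedges p : seq {set V} := map (fun ab => [set ab.1; ab.2]) (zip p (behead p)).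
Definition plen p : nat := (size p).-1.

Definition valid_path E F p : bool :=
  match p with
  | [::] => false
  | a :: s => [&& uniq p, s != [::],
                  all (fun e => e \in ET E F) (pedges p),
                  a \in Cset E F, last a s \in Cset E F &
                  all (fun v => v \notin Cset E F) (take (size s).-1 s)]
  end.

Definition path_decomposition E F P : Prop :=
  [/\ all (valid_path E F) P,
      forall e, e \in ET E F -> count (fun p => e \in pedges p) P = 1 &
      sorted leq (map plen P)].

Definition GV E F P (i : nat) : {set V} :=
  Cset E F :|: \bigcup_(p <- take i P) [set v | v \in p].
Definition GE F P (i : nat) : {set {set V}} :=
  F :|: \bigcup_(p <- take i P) [set e | e \in pedges p].

Definition stop_cond F P (i : nat) : bool :=
  2 * (#|GE F P i| + size P) < plen (nth [::] P i).
End Defs.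

From mathcomp Require Import all_boot zify.
Set Implicit Arguments. Unset Strict Implicit. Unset Printing Implicit Defensive.

(* Every vertex of G' has degree at least 2 in the graph T + F, where the forest
   T = G' - F has at most |V(G')| edges.  By the handshake lemma the total excess
   of these degrees over 2 is at most 2k, so at most 2k vertices of G' have degree
   at least 3 in T + F, and with the at most 2k endpoints of F this gives
   |C| <= 4k.  The same count shows that at most 2|C| pairs (v, e) have v in C
   and e an edge of T at v; the first and the last edge of each path P_i give two
   such pairs, and all of them are distinct, so x <= |C|.  As long as the stopping
   condition fails, adding P_(i+1) at most triples |E(G_i)| + x, so after
   j <= x <= 4k steps |V(G_j)| <= |C| + j + (3^j - 1)(k + x) <= 10k 81^k. *)

Lemma card_bigcup_le (I T : finType) (P : pred I) (A : I -> {set T}) :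
  #|\bigcup_(i | P i) A i| <= \sum_(i | P i) #|A i|.
Proof.
apply: (big_ind2 (fun (B : {set T}) n => #|B| <= n)) => [|B1 n1 B2 n2 le1 le2|//].
  by rewrite cards0.
by apply: leq_trans (leq_card_setU _ _) _; apply: leq_add.
Qed.

Lemma leq_card_gt2_sum (T : finType) (A : {set T}) (d : T -> nat) :
  {in A, forall v, 2 <= d v} -> 2 * #|A| + #|[set v in A | 2 < d v]| <= \sum_v d v.
Proof.
move=> ge2; rewrite (bigID (mem A)) /=; apply: leq_trans (leq_addr _ _).
rewrite -sum1dep_card mulnC -sum_nat_const big_mkcondr -big_split /=.
by apply: leq_sum => v vA; case: ifP; have := ge2 v vA; lia.
Qed.

Lemma count_le1_nth_inj (T : Type) (a : pred T) (x0 : T) (s : seq T) i j :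
  count a s <= 1 -> i < size s -> j < size s ->
  a (nth x0 s i) -> a (nth x0 s j) -> i = j.
Proof.
elim: s i j => [//|y s IH] [|i] [|j] //= cnt lt_is lt_js ai aj.
- have : has a s by apply/(has_nthP x0); exists j.
  by move: cnt; rewrite has_count ai; lia.
- have : has a s by apply/(has_nthP x0); exists i.
  by move: cnt; rewrite has_count aj; lia.
- by congr _.+1; apply: IH => //; lia.
Qed.

Lemma iter_deflationary_fixed (T : finType) (f : {set T} -> {set T}) n (A : {set T}) :
  (forall B, f B \subset B) -> #|A| <= n -> f (iter n f A) = iter n f A.
Proof.
move=> deflf; elim: n A => [|n IH] A leAn.
  move: leAn; rewrite leqn0 cards_eq0 => /eqP ->.
  by apply/eqP; rewrite -subset0 deflf.
have [fA_eq|fA_neq] := eqVneq (f A) A; first by rewrite !iter_fix.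
rewrite iterSr; apply: IH; rewrite -ltnS; apply: leq_trans leAn.
by apply: proper_card; rewrite properEneq fA_neq deflf.
Qed.

Lemma bigcup_take_succ (I : Type) (T : finType) (x0 : I) (s : seq I) (f : I -> {set T}) i :
  i < size s ->
  \bigcup_(x <- take i.+1 s) f x = (\bigcup_(x <- take i s) f x) :|: f (nth x0 s i).
Proof. by move=> lt_is; rewrite (take_nth x0 lt_is) -cats1 big_cat big_seq1. Qed.

Lemma card_set_seq_le (T : finType) (s : seq T) : #|[set x | x \in s]| <= size s.
Proof. by apply: leq_trans (card_size s); apply/subset_leq_card/subsetP => x; rewrite inE. Qed.

Section Graphs.
Variable V : finType.
Implicit Types (E : {set {set V}}) (S : {set V}).

Definition deg E (v : V) : nat := #|[set e in E | v \in e]|.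

Definition adj E (a b : V) : bool := [set a; b] \in E.

Lemma sub_acyclic E1 E2 : E1 \subset E2 -> acyclic E2 -> acyclic E1.
Proof.
move=> sub12 ac2 [//|v r]; apply: contra (ac2 (v :: r)).
rewrite /is_cycle => /and3P [-> -> /=].
by apply: sub_path => a b; apply: (subsetP sub12).
Qed.

Lemma sum_deg E : simple_graph E -> \sum_v deg E v = 2 * #|E|.
Proof.
move=> simpleE; transitivity (\sum_(e in E) #|e|).
  rewrite (eq_bigr (fun v => \sum_(e | (e \in E) && (v \in e)) 1)) => [|v _]; last first.
    by rewrite /deg -sum1dep_card.
  rewrite (exchange_big_dep [pred e | e \in E]) => [|v e _ /andP []//].
  apply: eq_bigr => e; rewrite inE => eE.
  by rewrite -sum1_card; apply: eq_bigl => v; rewrite eE.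
by rewrite (eq_bigr (fun=> 2)) => [|e /simpleE //]; rewrite sum_nat_const mulnC.
Qed.

Lemma card_incident_pairs E (A : {set V}) :
  #|[set z : V * {set V} | [&& z.1 \in A, z.2 \in E & z.1 \in z.2]]| =
  \sum_(v in A) deg E v.
Proof.
rewrite -sum1dep_card.
transitivity (\sum_(v in A) \sum_(e | (e \in E) && (v \in e)) 1).
  by rewrite pair_big_dep.
by apply: eq_bigr => v _; rewrite sum1dep_card.
Qed.

Lemma card_endpoints_le E : simple_graph E -> #|\bigcup_(e in E) e| <= 2 * #|E|.
Proof.
move=> simpleE; apply: leq_trans (card_bigcup_le _ _) _.
by rewrite (eq_bigr (fun=> 2)) => [|e /simpleE //]; rewrite sum_nat_const mulnC.
Qed.

Lemma edge_other_end E e v :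
  simple_graph E -> e \in E -> v \in e -> exists2 w, w != v & e = [set v; w].
Proof.
move=> simpleE eE; have /cards2P [a [b [neq_ab ->]]] : #|e| == 2 by rewrite simpleE.
rewrite !inE => /orP [] /eqP ->.
  by exists b; rewrite // eq_sym.
by exists a; rewrite // setUC.
Qed.

Lemma extend_path E v r : simple_graph E -> acyclic E -> 2 <= deg E v ->
  uniq (v :: r) -> path (adj E) v r ->
  exists w, uniq (w :: v :: r) && path (adj E) w (v :: r).
Proof.
move=> simpleE acE deg_v uniq_vr path_vr.
have [e /andP [eE ve] ne] : exists2 e, (e \in E) && (v \in e) & e != [set v; head v r].
  apply/exists_inP; apply: contraLR deg_v => /exists_inPn not_other.
  rewrite -ltnNge ltnS -(cards1 [set v; head v r]); apply: subset_leq_card.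
  by apply/subsetP => e; rewrite !inE => /not_other; rewrite negbK.
have [w neq_wv def_e] := edge_other_end simpleE eE ve.
have adj_wv : adj E w v by rewrite /adj setUC -def_e.
have [wr|wr] := boolP (w \in r); last first.
  by exists w; rewrite cons_uniq uniq_vr inE negb_or neq_wv wr /= adj_wv path_vr.
exfalso; move: uniq_vr path_vr ne; case: (splitPr wr) => r1 r2.
rewrite -cat_rcons -cat_cons cat_uniq cat_path => /andP [uniq_c _] /andP [path_c _].
have [->|r1_neq0] := eqVneq r1 [::]; first by rewrite /= def_e eqxx.
move=> _; have /negP := acE (v :: rcons r1 w); apply; apply/and3P; split => //.
  by rewrite /= size_rcons; case: r1 r1_neq0 {uniq_c path_c}.
by rewrite /= rcons_path path_c last_rcons.
Qed.

Lemma acyclic_leaf E S : simple_graph E -> acyclic E ->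
  (forall e, e \in E -> e \subset S) -> S != set0 -> exists2 v, v \in S & deg E v <= 1.
Proof.
move=> simpleE acE sub_ES /set0Pn [v0 v0S]; apply/exists_inP; apply: contraT.
move=> /exists_inPn; rewrite -/(deg E _) => high.
(* Otherwise every path with its head in S extends to a longer one. *)
have long n : exists v r, [&& v \in S, uniq (v :: r), path (adj E) v r & n <= size r].
  elim: n => [|n [v [r /and4P [vS uniq_vr path_vr le_nr]]]].
    by exists v0, [::]; rewrite v0S.
  have [|w /andP [uniq_wvr path_wvr]] := extend_path simpleE acE _ uniq_vr path_vr.
    by rewrite ltnNge high.
  have wS : w \in S by move: path_wvr => /andP [/sub_ES/subsetP -> //]; rewrite !inE eqxx.
  by exists w, (v :: r); rewrite wS uniq_wvr path_wvr.
have [v [r /and4P [_ uniq_vr _]]] := long #|V|.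
by rewrite -ltnS -[(size r).+1]/(size (v :: r)) -(card_uniqP uniq_vr) ltnNge max_card.
Qed.

Lemma card_forest_le E S : simple_graph E -> acyclic E ->
  (forall e, e \in E -> e \subset S) -> #|E| <= #|S|.
Proof.
move cardS : #|S| => n; elim: n E S cardS => [|n IH] E S cardS simpleE acE sub_ES.
  suff -> : E = set0 by rewrite cards0.
  apply/setP => e; rewrite inE; apply/negP => eE.
  move/eqP: cardS; rewrite cards_eq0 => /eqP S0.
  by have := simpleE e eE; have := sub_ES e eE; rewrite S0 subset0 => /eqP ->; rewrite cards0.
have [|v vS deg_v] := acyclic_leaf simpleE acE sub_ES; first by rewrite -card_gt0 cardS.
pose E' := E :\: [set e : {set V} | v \in e].
have le_E' : #|E'| <= n.
  apply: (IH _ (S :\ v)).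
  - by move: cardS; rewrite (cardsD1 v) vS => -[].
  - by move=> e; rewrite !inE => /andP [_ /simpleE].
  - by apply: sub_acyclic acE; apply: subsetDl.
  - by move=> e; rewrite !inE => /andP [vNe eE]; rewrite subsetD1 sub_ES.
have -> : #|E| = deg E v + #|E'|.
  rewrite -(cardsID [set e : {set V} | v \in e] E); congr (_ + _).
  by apply: eq_card => e; rewrite !inE andbC.
by rewrite addnC -addn1 leq_add.
Qed.

Lemma prune_step_sub E S : prune_step E S \subset S.
Proof. by apply/subsetP => v; rewrite inE => /andP []. Qed.

Lemma deg_in_VG' E v : v \in VG' E -> 2 <= deg_in E (VG' E) v.
Proof.
have fixed : prune_step E (VG' E) = VG' E.
  by apply: iter_deflationary_fixed; [exact: prune_step_sub | rewrite cardsT].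
by rewrite -{1}fixed inE => /andP [].
Qed.

Lemma size_pedges (p : seq V) : size (pedges p) = plen p.
Proof. by rewrite size_map size_zip size_behead /plen; lia. Qed.

Lemma mem_pedges_nth x0 (p : seq V) i :
  i.+1 < size p -> [set nth x0 p i; nth x0 p i.+1] \in pedges p.
Proof.
elim: p i => [|a [|b p] IH] [|i] //= lt_ip; rewrite inE; first by rewrite eqxx.
by rewrite IH ?orbT.
Qed.

(* The first (if [b]) or the last vertex of [p], with the edge of [p] at that end. *)
Definition end_flag (x0 : V) (p : seq V) (b : bool) : V * {set V} :=
  let i := if b then 0 else (size p).-2 in
  (nth x0 p (if b then i else i.+1), [set nth x0 p i; nth x0 p i.+1]).

End Graphs.

Section Decomposition.
Variables (V : finType) (E F : {set {set V}}).
Hypotheses (simpleE : simple_graph E) (fesF : feedback_edge_set E F).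

Local Notation S := (VG' E).
Local Notation T := (ET E F).
Local Notation C := (Cset E F).

Lemma simple_ET : simple_graph T.
Proof. by move=> e; rewrite !inE => /andP [_ /andP [/simpleE]]. Qed.

Lemma simple_F : simple_graph F.
Proof. by move=> e /(subsetP fesF.1)/simpleE. Qed.

Lemma ET_sub_VG' e : e \in T -> e \subset S.
Proof. by rewrite !inE => /and3P []. Qed.

Lemma card_ET_le : #|T| <= #|S|.
Proof.
apply: card_forest_le simple_ET _ ET_sub_VG'.
case: fesF => _; apply: sub_acyclic; apply/subsetP => e.
by rewrite !inE => /andP [-> /andP [-> _]].
Qed.

Lemma deg_F_notin_Cset v : v \notin C -> deg F v = 0.
Proof.
move=> vNC; apply/eqP; rewrite cards_eq0; apply/eqP/setP => e; rewrite in_set0 in_set.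
apply: contraNF vNC => /andP [eF ve]; rewrite inE; apply/orP; right.
by apply/bigcupP; exists e.
Qed.

Lemma deg_ET_F_ge2 v : v \in S -> 2 <= deg T v + deg F v.
Proof.
move=> vS; apply: leq_trans (deg_in_VG' vS) _; apply: leq_trans (leq_card_setU _ _).
apply: subset_leq_card; apply/subsetP => e; rewrite !inE => /andP [eE /andP [ve eS]].
by rewrite eE eS ve /= !andbT; case: (e \in F).
Qed.

Lemma card_deg_gt2_le : #|[set v in S | 2 < deg T v + deg F v]| <= 2 * #|F|.
Proof.
have := @leq_card_gt2_sum _ S (fun v => deg T v + deg F v) deg_ET_F_ge2.
have := card_ET_le.
by rewrite /= big_split (sum_deg simple_ET) (sum_deg simple_F) /=; lia.
Qed.

Lemma card_Cset_le : #|C| <= 4 * #|F|.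
Proof.
have C_sub : C \subset [set v in S | 2 < deg T v + deg F v] :|: \bigcup_(e in F) e.
  apply/setSU/subsetP => v; rewrite !inE => /andP [-> le3].
  exact: leq_trans le3 (leq_addr _ _).
apply: leq_trans (subset_leq_card C_sub) _; apply: leq_trans (leq_card_setU _ _) _.
rewrite -[4]/(2 + 2) mulnDl; apply: leq_add; first exact: card_deg_gt2_le.
exact: card_endpoints_le simple_F.
Qed.

Lemma sum_deg_ET_Cset_le : \sum_(v in C) deg T v <= 2 * #|C|.
Proof.
suff : \sum_(v in C) deg T v + 2 * #|S| <= \sum_v deg T v + 2 * #|C|.
  by rewrite (sum_deg simple_ET); have := card_ET_le; lia.
rewrite !(mulnC 2) -!sum_nat_const.
rewrite [\sum_(v in C) deg T v]big_mkcond [\sum_(v in S) 2]big_mkcond.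
rewrite [\sum_(v in C) 2]big_mkcond -!big_split /=.
apply: leq_sum => v _; have [vC|vC] := boolP (v \in C); have [vS|vS] := boolP (v \in S).
- by [].
- by rewrite leq_add2l.
- by have := deg_ET_F_ge2 vS; rewrite deg_F_notin_Cset // addn0.
- by [].
Qed.

Lemma valid_path_inv x0 p : valid_path E F p ->
  [/\ 1 < size p, uniq p, nth x0 p 0 \in C, nth x0 p (size p).-1 \in C
    & {subset pedges p <= T}].
Proof.
case: p => // a s /andP [uniq_p /and5P [s_neq0 /allP edges_T aC lastC _]].
by split; rewrite ?nth_last //; case: s s_neq0 {uniq_p edges_T lastC}.
Qed.

Lemma end_flag_valid x0 p b : valid_path E F p ->
  [/\ (end_flag x0 p b).1 \in C, (end_flag x0 p b).2 \in pedges p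
    & (end_flag x0 p b).1 \in (end_flag x0 p b).2].
Proof.
move=> /(valid_path_inv x0) [size_p _ first_C last_C _].
case: b; split; rewrite /= ?set21 ?set22 //; try by apply: mem_pedges_nth; lia.
by rewrite (_ : (size p).-2.+1 = (size p).-1) //; lia.
Qed.

Lemma end_flag_inj x0 p : valid_path E F p -> injective (end_flag x0 p).
Proof.
move=> /(valid_path_inv x0) [size_p uniq_p _ _ _].
have lt_first : 0 < size p := ltnW size_p.
have lt_last : (size p).-2.+1 < size p by lia.
have first_neq_last : nth x0 p 0 != nth x0 p (size p).-2.+1 by rewrite nth_uniq.
by move=> [] [] // [eq_v _]; move: first_neq_last; rewrite eq_v eqxx.
Qed.

Lemma size_decomposition_le P : path_decomposition E F P -> size P <= #|C|.
Proof.
case=> /allP valid cnt _; have [->//|P_gt0] := posnP (size P).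
have valid_nth (i : 'I_(size P)) : valid_path E F (nth [::] P i).
  exact/valid/mem_nth.
have [x0 _] : exists x0 : V, true.
  by case: (nth [::] P 0) (valid_nth (Ordinal P_gt0)) => [//|x0 _ _]; exists x0.
pose flag (z : 'I_(size P) * bool) := end_flag x0 (nth [::] P z.1) z.2.
have flag_edge z : (flag z).2 \in T.
  have [_ _ _ _ edges_T] := valid_path_inv x0 (valid_nth z.1).
  by have [_ /edges_T] := end_flag_valid x0 z.2 (valid_nth z.1).
(* Distinct paths share no edge, and the two ends of a path are distinct vertices. *)
have flag_inj : injective flag.
  move=> [i b] [i' b'] eq_flag; have eq_i : i = i'.
    apply: val_inj.
    apply: (count_le1_nth_inj (a := fun p => (flag (i, b)).2 \in pedges p) (x0 := [::])).
    - exact: eq_leq (cnt _ (flag_edge (i, b))).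
    - exact: ltn_ord.
    - exact: ltn_ord.
    - by have [] := end_flag_valid x0 b (valid_nth i).
    - by rewrite eq_flag; have [] := end_flag_valid x0 b' (valid_nth i').
  by move: eq_flag; rewrite -eq_i /flag /= => /(end_flag_inj (valid_nth i)) ->.
have : #|[set: 'I_(size P) * bool]| <= \sum_(v in C) deg T v.
  rewrite -card_incident_pairs -(card_imset _ flag_inj).
  apply/subset_leq_card/subsetP => _ /imsetP [z _ ->].
  have [vC _ ve] := end_flag_valid x0 z.2 (valid_nth z.1).
  by rewrite inE vC flag_edge ve.
by rewrite cardsT card_prod card_ord card_bool; have := sum_deg_ET_Cset_le; lia.
Qed.

End Decomposition.

Section Growth.
Variables (V : finType) (E F : {set {set V}}) (P : seq (seq V)).

Lemma GE0 : GE F P 0 = F.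
Proof. by rewrite /GE take0 big_nil setU0. Qed.

Lemma GV0 : GV E F P 0 = Cset E F.
Proof. by rewrite /GV take0 big_nil setU0. Qed.

Lemma card_GE_succ i :
  i < size P -> #|GE F P i.+1| <= #|GE F P i| + plen (nth [::] P i).
Proof.
move=> lt_iP; rewrite /GE (bigcup_take_succ [::]) // setUA.
apply: leq_trans (leq_card_setU _ _) _; rewrite leq_add2l -size_pedges.
exact: card_set_seq_le.
Qed.

Lemma card_GV_succ i :
  i < size P -> #|GV E F P i.+1| <= #|GV E F P i| + (plen (nth [::] P i)).+1.
Proof.
move=> lt_iP; rewrite /GV (bigcup_take_succ [::]) // setUA.
apply: leq_trans (leq_card_setU _ _) _; rewrite leq_add2l /plen.
by apply: leq_trans (card_set_seq_le _) _; lia.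
Qed.

End Growth.

Lemma geometric_growth (a n L : nat -> nat) (c j : nat) :
  (forall i, i < j -> a i.+1 <= a i + L i) ->
  (forall i, i < j -> n i.+1 <= n i + (L i).+1) ->
  (forall i, i < j -> L i <= 2 * (a i + c)) ->
  n j + (a 0 + c) <= n 0 + j + 3 ^ j * (a 0 + c).
Proof.
move=> step_a step_n step_L.
suff /(_ j (leqnn j)) [] : forall i, i <= j ->
    a i + c <= 3 ^ i * (a 0 + c) /\ n i + (a 0 + c) <= n 0 + i + 3 ^ i * (a 0 + c) by [].
elim=> [|i IH] le_ij; first by rewrite expn0 mul1n; lia.
have [IH_a IH_n] := IH (ltnW le_ij).
have := step_a i le_ij; have := step_n i le_ij; have := step_L i le_ij.
by rewrite expnS -mulnA; move: (3 ^ i * _) IH_a IH_n => z; lia.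
Qed.

Theorem mainTheorem9 (V : finType) (E : {set {set V}}) (l : nat)
    (F : {set {set V}}) (P : seq (seq V)) (j : nat) :
  simple_graph E -> 2 <= l ->
  min_feedback_edge_set E F ->
  path_decomposition E F P ->
  j <= size P ->
  (forall i, i < j -> ~~ stop_cond F P i) ->
  (j < size P -> stop_cond F P j) ->
  #|GV E F P j| <= 10 * #|F| * 81 ^ #|F|.
Proof.
move=> simpleE _ [fesF _] dec le_jP no_stop _.
have le_x_C := size_decomposition_le simpleE fesF dec.
have le_C_k := card_Cset_le simpleE fesF.
have growth : #|GV E F P j| + (#|GE F P 0| + size P) <=
    #|GV E F P 0| + j + 3 ^ j * (#|GE F P 0| + size P).
  apply: (@geometric_growth (fun i => #|GE F P i|) (fun i => #|GV E F P i|)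
    (fun i => plen (nth [::] P i))) => i lt_ij.
  - by apply: card_GE_succ; lia.
  - by apply: card_GV_succ; lia.
  - by move: (no_stop i lt_ij); rewrite /stop_cond -leqNgt.
rewrite GE0 GV0 in growth.
have le_pow : 3 ^ j <= 81 ^ #|F| by rewrite -[81]/(3 ^ 4) -expnM leq_pexp2l //; lia.
have : 3 ^ j * (#|F| + size P) <= 81 ^ #|F| * (5 * #|F|) by apply: leq_mul; lia.
nia.
Qed.
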